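(* Let $H$ be an admissible Hamiltonian with Hessian $\mathcal H$, and let $q_0,\dots,q_{n-1}$ be the functions defined by $q_\ell(x)=\frac1{2n}\operatorname{tr}\big((A^T)^\ell(J(x)\mathcal H)^2\big)$ (so that $(J(x)\mathcal H)^2=\sum_{\ell=0}^{n-1}q_\ell(x)A^\ell$). Then $\nabla q_\ell(x)=A^\ell\nabla q_0(x)$, equivalently $\nabla q_\ell=A\nabla q_{\ell-1}$, for $\ell=1,\dots,n-1$.
   Context: Fix an integer $n\ge 2$. Points of $\mathbb R^{2n}$ are $x=(x_1,\dots,x_{2n})^{T}$; write $u=(x_1,\dots,x_n)^T$. Let $X(u)$ be the $n\times n$ matrix with entries $X(u)_{ij}=x_{k}$ where $k\in\{1,\dots,n\}$, $k\equiv i+j-1 \pmod n$, and let $J(x)=\begin{pmatrix}0&X(u)\\-X(u)&0\end{pmatrix}$. Let $\mathcal P$ be the $n\times n$ cyclic shift matrix ($\mathcal P_{i,i+1}=1$ for $1\le i\le n-1$, $\mathcal P_{n,1}=1$, all other entries $0$) and $A=\begin{pmatrix}\mathcal P&0\\0&\mathcal P\end{pmatrix}$. An admissible Hamiltonian is a homogeneous quadratic form $H(x)=\tfrac12 x^T\mathcal H x$ with a constant symmetric matrix $\mathcal H=\nabla^2H$ satisfying $A\mathcal H=\mathcal H A^T$. *)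

(* The real numbers are generalized to an arbitrary
   realFieldType R (the reals being an instance); derivatives are defined by
   the usual epsilon-delta limit of difference quotients. *)
From HB Require Import structures.
From mathcomp Require Import all_boot all_order all_algebra.
Set Implicit Arguments. Unset Strict Implicit. Unset Printing Implicit Defensive.
Import Order.TTheory GRing.Theory Num.Theory.
Local Open Scope ring_scope.

Section Defs.
Variable R : realFieldType.
Variable n : nat.

(* points of R^(2n) are column vectors indexed by 'I_(n+n);
   0-based index k < n corresponds to x_(k+1) *)

(* X(u)_{ij} = x_k with k = i+j-1 mod n (1-based); 0-based: k = (i+j) mod n *)
Definition Xmat (x : 'cV[R]_(n + n)) : 'M[R]_n :=
  \matrix_(i < n, j < n) x (lshift n (insubd i ((i + j) %% n)%N)) 0.

Definition Jmat (x : 'cV[R]_(n + n)) : 'M[R]_(n + n) :=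
  block_mx 0 (Xmat x) (- Xmat x) 0.

(* cyclic shift: P_{i,i+1} = 1, P_{n,1} = 1 (1-based); 0-based: P i j = [j == (i+1) mod n] *)
Definition Pshift : 'M[R]_n := \matrix_(i < n, j < n) ((j : nat) == (i.+1 %% n)%N)%:R.

Definition Amat : 'M[R]_(n + n) := block_mx Pshift 0 0 Pshift.

Definition admissible (Hm : 'M[R]_(n + n)) : Prop :=
  Hm^T = Hm /\ Amat *m Hm = Hm *m Amat^T.

Definition qfun (Hm : 'M[R]_(n + n)) (l : nat) (x : 'cV[R]_(n + n)) : R :=
  ((n + n)%:R)^-1 * \tr ((Amat^T) ^+ l *m ((Jmat x *m Hm) *m (Jmat x *m Hm))).

End Defs.

Definition has_derivative (R : realFieldType) (f : R -> R) (t0 d : R) : Prop :=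
  forall eps : R, 0 < eps -> exists2 delta : R, 0 < delta &
    forall h : R, h != 0 -> `|h| < delta ->
      `|(f (t0 + h) - f t0) / h - d| < eps.

Definition evec (R : realFieldType) (m : nat) (k : 'I_m) : 'cV[R]_m :=
  \col_(i < m) (i == k)%:R.

Definition is_gradient (R : realFieldType) (m : nat) (f : 'cV[R]_m -> R)
    (x g : 'cV[R]_m) : Prop :=
  forall k : 'I_m, has_derivative (fun t => f (x + t *: evec R k)) 0 (g k 0).

(** The first-order variation of [q_l] at [x] in the direction [y] is
    [tr((A^T)^l (J(y)H J(x)H + J(x)H J(y)H))/(2n)].  Since [J] is linear and
    intertwines the shift, [A^T J(y) = J(A^T y)] and [J(y) A = J(A^T y)], and
    since [A H = H A^T], the factor [(A^T)^l] can be pushed inside [J(y)]: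
    the variation of [q_l] along [y] is the variation of [q_0] along
    [(A^T)^l y].  Reading this off on the basis vectors [e_k] gives
    [dq_l/dx_k = <grad q_0, (A^T)^l e_k> = (A^l grad q_0)_k].  The argument
    works for every [l] and does not use the symmetry of [H]. *)

From HB Require Import structures.
From mathcomp Require Import all_boot all_order all_algebra zify ring.
Set Implicit Arguments. Unset Strict Implicit. Unset Printing Implicit Defensive.
Import Order.TTheory GRing.Theory Num.Theory.
Local Open Scope ring_scope.

Section CyclicIndex.
Variable n : nat.

Definition ord_addmod (i j : 'I_n) : 'I_n := insubd i ((i + j) %% n)%N.

Lemma ord_addmodE (i j : 'I_n) : val (ord_addmod i j) = ((i + j) %% n)%N.
Proof.
by rewrite /ord_addmod insubdK // -topredE /= ltn_pmod // (leq_ltn_trans (leq0n i)).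
Qed.

Lemma ord_predE (i : 'I_n) : val (ord_pred i) = ((i + n.-1) %% n)%N.
Proof.
have n_gt0 : (0 < n)%N by apply: leq_ltn_trans (ltn_ord i).
by rewrite /=; congr (_ %% n)%N; lia.
Qed.

Lemma ord_pred_addmodl (i j : 'I_n) :
  ord_pred (ord_addmod i j) = ord_addmod (ord_pred i) j.
Proof.
by apply: val_inj; rewrite ord_predE !ord_addmodE ord_predE !modnDml addnAC.
Qed.

Lemma ord_pred_addmodr (i j : 'I_n) :
  ord_pred (ord_addmod i j) = ord_addmod i (ord_pred j).
Proof.
by apply: val_inj; rewrite ord_predE !ord_addmodE ord_predE modnDml modnDmr addnA.
Qed.

End CyclicIndex.

Section CirculantHankel.
Variables (R : realFieldType) (n : nat).
Local Notation P := (Pshift R n).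

Definition hankel_circ (u : 'cV[R]_n) : 'M[R]_n :=
  \matrix_(i, j) u (ord_addmod i j) 0.

Lemma PshiftE i j : P i j = (i == ord_pred j)%:R.
Proof.
rewrite mxE; suff -> : ((j : nat) == (i.+1 %% n)%N) = (i == ord_pred j) by [].
apply/eqP/eqP => [ji | ->]; last by rewrite -[in LHS](ord_predK j).
by rewrite -(ordSK i); congr ord_pred; apply: val_inj; rewrite /= ji.
Qed.

Lemma trPshift_mulE m (M : 'M[R]_(n, m)) i j :
  (P^T *m M) i j = M (ord_pred i) j.
Proof.
rewrite mxE (bigD1 (ord_pred i)) //= mxE PshiftE eqxx mul1r big1 ?addr0 //.
by move=> k; rewrite mxE PshiftE eq_sym => /negbTE ->; rewrite mul0r.
Qed.

Lemma mulmx_PshiftE m (M : 'M[R]_(m, n)) i j : (M *m P) i j = M i (ord_pred j).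
Proof.
rewrite mxE (bigD1 (ord_pred j)) //= PshiftE eqxx mulr1 big1 ?addr0 //.
by move=> k /negbTE; rewrite PshiftE eq_sym => ->; rewrite mulr0.
Qed.

Lemma trPshift_hankel_circ u : P^T *m hankel_circ u = hankel_circ (P^T *m u).
Proof.
apply/matrixP => i j; rewrite trPshift_mulE [LHS]mxE [RHS]mxE.
by rewrite trPshift_mulE ord_pred_addmodl.
Qed.

Lemma hankel_circ_Pshift u : hankel_circ u *m P = hankel_circ (P^T *m u).
Proof.
apply/matrixP => i j; rewrite mulmx_PshiftE [LHS]mxE [RHS]mxE.
by rewrite trPshift_mulE ord_pred_addmodr.
Qed.

End CirculantHankel.

Section JmatShift.
Variables (R : realFieldType) (n : nat).
Local Notation P := (Pshift R n).
Local Notation A := (Amat R n).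

Lemma Xmat_hankel_circ (x : 'cV[R]_(n + n)) : Xmat x = hankel_circ (usubmx x).
Proof. by apply/matrixP => i j; rewrite !mxE. Qed.

Lemma trAmat : A^T = block_mx P^T 0 0 P^T.
Proof. by rewrite tr_block_mx !trmx0. Qed.

Lemma usubmx_trAmat (y : 'cV[R]_(n + n)) : usubmx (A^T *m y) = P^T *m usubmx y.
Proof. by rewrite -{1}(vsubmxK y) trAmat mul_block_col col_mxKu mul0mx addr0. Qed.

Lemma trAmat_Jmat y : A^T *m Jmat y = Jmat (A^T *m y).
Proof.
rewrite /Jmat !Xmat_hankel_circ usubmx_trAmat trAmat mulmx_block.
rewrite -trPshift_hankel_circ.
by rewrite !mul0mx !mulmx0 !addr0 !add0r mulmxN.
Qed.

Lemma Jmat_Amat y : Jmat y *m A = Jmat (A^T *m y).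
Proof.
rewrite /Jmat !Xmat_hankel_circ usubmx_trAmat mulmx_block -hankel_circ_Pshift.
by rewrite !mul0mx !mulmx0 !addr0 !add0r mulNmx.
Qed.

Lemma Jmat_is_linear : linear (@Jmat R n).
Proof.
move=> a y z; have XZD : Xmat (a *: y + z) = a *: Xmat y + Xmat z.
  by apply/matrixP => i j; rewrite !mxE.
by rewrite /Jmat XZD scale_block_mx add_block_mx !scaler0 !addr0 scalerN opprD.
Qed.

HB.instance Definition _ :=
  GRing.isLinear.Build R 'cV[R]_(n + n) 'M[R]_(n + n) _ (@Jmat R n) Jmat_is_linear.

Lemma trAmatX_Jmat l y : A^T ^+ l *m Jmat y = Jmat (A^T ^+ l *m y).
Proof.
elim: l => [|l IH]; first by rewrite !expr0 !mul1mx.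
by rewrite exprS -mulmxE -!mulmxA IH trAmat_Jmat.
Qed.

Lemma Jmat_AmatX l y : Jmat y *m A ^+ l = A^T ^+ l *m Jmat y.
Proof.
elim: l => [|l IH]; first by rewrite !expr0 mulmx1 mul1mx.
by rewrite !exprSr -!mulmxE mulmxA IH -mulmxA Jmat_Amat -trAmat_Jmat mulmxA.
Qed.

End JmatShift.

Section Gradient.
Variable R : realFieldType.

Lemma has_derivative_quadratic (f : R -> R) t0 b c :
  (forall h, f (t0 + h) - f t0 = h * b + h ^+ 2 * c) -> has_derivative f t0 b.
Proof.
move=> fE eps eps_gt0; have c1_gt0 : 0 < `|c| + 1 by apply: ltr_wpDl.
exists (eps / (`|c| + 1)) => [|h h_neq0 h_lt]; first exact: divr_gt0.
have -> : (f (t0 + h) - f t0) / h - b = h * c by rewrite fE; field.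
rewrite normrM (le_lt_trans (y := `|h| * (`|c| + 1))) ?ler_wpM2l ?lerDl //.
by rewrite -ltr_pdivlMr.
Qed.

Lemma is_gradient_quadratic m (f : 'cV[R]_m -> R) (x g : 'cV[R]_m)
    (c : 'I_m -> R) :
    (forall k h, f (x + h *: evec R k) = f x + h * g k 0 + h ^+ 2 * c k) ->
  is_gradient f x g.
Proof.
move=> fE k; apply: (has_derivative_quadratic (c := c k)) => h.
rewrite add0r scale0r addr0 fE; ring.
Qed.

Lemma evec_sum m (y : 'cV[R]_m) : y = \sum_j y j 0 *: evec R j.
Proof.
apply/matrixP => i k; rewrite (ord1 k) summxE (bigD1 i) //= !mxE eqxx mulr1.
by rewrite big1 ?addr0 // => j ji; rewrite !mxE eq_sym (negbTE ji) mulr0.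
Qed.

Lemma linear_evec_sum m (f : 'cV[R]_m -> R) :
    (forall a y z, f (a *: y + z) = a * f y + f z) ->
  forall y, f y = \sum_j y j 0 * f (evec R j).
Proof.
move=> fZD y; have f0 : f 0 = 0.
  by have := fZD (-1) 0 0; rewrite scaler0 addr0 mulN1r addNr.
rewrite {1}(evec_sum y); apply: (big_rec2 (fun u v => f u = v)) => // j u v _ <-.
exact: fZD.
Qed.

Lemma mulmx_evecE m (M : 'M[R]_m) j k : (M *m evec R k) j 0 = M j k.
Proof.
rewrite mxE (bigD1 k) //= mxE eqxx mulr1 big1 ?addr0 //.
by move=> i /negbTE ik; rewrite mxE ik mulr0.
Qed.

End Gradient.

Section Qfun.
Variables (R : realFieldType) (n : nat) (Hm : 'M[R]_(n + n)).
Local Notation A := (Amat R n).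
Local Notation JH y := (Jmat y *m Hm).

Definition qfun_deriv l (x y : 'cV[R]_(n + n)) : R :=
  ((n + n)%:R)^-1 *
  (\tr (A^T ^+ l *m (JH y *m JH x)) + \tr (A^T ^+ l *m (JH x *m JH y))).

Lemma qfun_expand l x y h :
  qfun Hm l (x + h *: y) = qfun Hm l x + h * qfun_deriv l x y + h ^+ 2 * qfun Hm l y.
Proof.
rewrite /qfun /qfun_deriv linearD linearZ /= mulmxDl -scalemxAl.
rewrite !(mulmxDl, mulmxDr) -!(scalemxAl, scalemxAr) !scalerA !linearD !linearZ /=.
ring.
Qed.

Lemma is_gradient_qfun l x :
  is_gradient (qfun Hm l) x (\col_k qfun_deriv l x (evec R k)).
Proof.
by apply: (is_gradient_quadratic (c := fun k => qfun Hm l (evec R k))) => k h;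
  rewrite qfun_expand mxE.
Qed.

Lemma qfun_derivZD l x a y z :
  qfun_deriv l x (a *: y + z) = a * qfun_deriv l x y + qfun_deriv l x z.
Proof.
rewrite /qfun_deriv linearD linearZ /= !(mulmxDl, mulmxDr) -!(scalemxAl, scalemxAr).
rewrite !linearD !linearZ /=; ring.
Qed.

Hypothesis AmatH : A *m Hm = Hm *m A^T.

Lemma AmatX_H l : A ^+ l *m Hm = Hm *m A^T ^+ l.
Proof.
elim: l => [|l IH]; first by rewrite !expr0 mulmx1 mul1mx.
by rewrite !exprS -!mulmxE -mulmxA IH mulmxA AmatH -mulmxA.
Qed.

Lemma trAmatX_JH l x : A^T ^+ l *m JH x = JH x *m A^T ^+ l.
Proof. by rewrite -mulmxA -AmatX_H !mulmxA Jmat_AmatX. Qed.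

Lemma qfun_deriv_shift l x y : qfun_deriv l x y = qfun_deriv 0 x (A^T ^+ l *m y).
Proof.
rewrite /qfun_deriv expr0 !mul1mx !mulmxA trAmatX_Jmat -(mulmxA (A^T ^+ l)).
by rewrite trAmatX_JH -!mulmxA (mulmxA _ (Jmat y)) trAmatX_Jmat.
Qed.

End Qfun.

Lemma trmxX (R : comPzRingType) m (M : 'M[R]_m) l : (M ^+ l)^T = M^T ^+ l.
Proof.
elim: l => [|l IH]; first by rewrite !expr0 trmx1.
by rewrite exprSr exprS -!mulmxE trmx_mul IH.
Qed.

Theorem mainTheorem16 (R : realFieldType) (n : nat) (Hm : 'M[R]_(n + n))
    (l : nat) :
  (2 <= n)%N -> admissible Hm -> (1 <= l <= n.-1)%N ->
  forall x : 'cV[R]_(n + n),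
    exists g : 'cV[R]_(n + n),
      is_gradient (qfun Hm 0) x g /\
      is_gradient (qfun Hm l) x ((Amat R n) ^+ l *m g).
Proof.
move=> _ [_ AmatH] _ x; exists (\col_k qfun_deriv Hm 0 x (evec R k)).
split; first exact: is_gradient_qfun.
have -> : Amat R n ^+ l *m \col_k qfun_deriv Hm 0 x (evec R k)
          = \col_k qfun_deriv Hm l x (evec R k).
  apply/matrixP => k z; rewrite (ord1 z) !mxE qfun_deriv_shift //.
  rewrite (linear_evec_sum (qfun_derivZD Hm 0 x)); apply: eq_bigr => j _.
  by rewrite mulmx_evecE -trmxX !mxE mulrC.
exact: is_gradient_qfun.
Qed.
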